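(* Let $\lambda=(\lambda_1,\dots,\lambda_r)$ be a partition of $n$. Identify $\mathbb{C}[E_\lambda]$ with $\mathbb{C}[y_1,\dots,y_r]$, where $y_1$ is the common value of $x_i$ for $1\le i\le\lambda_1$, $y_2$ the common value of $x_i$ for $\lambda_1<i\le\lambda_1+\lambda_2$, etc. Then the pullback along the (surjective) composite map $E_\lambda\to X_\lambda\to X_\lambda/S_n$ identifies $\mathcal{O}(X_\lambda/S_n)$ with the subalgebra of $\mathbb{C}[y_1,\dots,y_r]$ generated by the Newton $\lambda$-sums $P_{i,\lambda}(y_1,\dots,y_r)=\lambda_1y_1^i+\cdots+\lambda_ry_r^i$, $i=1,2,\dots$
   Context: Work over $\mathbb{C}$. $E_\lambda\subset\mathbb{C}^n$ is the subspace defined by $x_1=\cdots=x_{\lambda_1}$, $x_{\lambda_1+1}=\cdots=x_{\lambda_1+\lambda_2}$, ..., $x_{n-\lambda_r+1}=\cdots=x_n$; $X_\lambda=S_n\cdot E_\lambda$ is the union of its $S_n$-translates, and $\mathcal{O}(X_\lambda/S_n)=\mathcal{O}(X_\lambda)^{S_n}$. *)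

From HB Require Import structures.
From mathcomp Require Import all_boot all_fingroup all_algebra.
From mathcomp Require Import reals.
From mathcomp Require Import complex.
From mathcomp Require Import mpoly.

Set Implicit Arguments.
Unset Strict Implicit.
Unset Printing Implicit Defensive.
Import GRing.Theory.
Local Open Scope ring_scope.

(* A partition lam = (lam_1,...,lam_r) of n : positive parts, non-increasing,
   summing to n (stated as hypotheses of the theorem). *)

(* So coordinates
   0 .. lam_1 - 1 are in block 0, lam_1 .. lam_1+lam_2-1 in block 1, etc. *)
Definition blk (lam : seq nat) (i : nat) : nat :=
  count (fun j => (\sum_(k < j.+1) nth 0 lam k <= i)%N) (iota 0 (size lam)).

(* extension of y : 'I_r -> C by 0 outside 0..r-1 (never used for i < n) *)
Definition ext (C : nzRingType) (r : nat) (y : 'I_r -> C) (j : nat) : C :=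
  if insub j is Some j' then y j' else 0.

Section Defs.
Variable C : comNzRingType.
Variable n : nat.
Variable lam : seq nat.
Local Notation r := (size lam).

Definition Epoint (y : 'I_r -> C) : 'I_n -> C := fun i => ext y (blk lam i).

(* X_lam = S_n . E_lam (S_n acting by permuting coordinates) *)
Definition in_X (x : 'I_n -> C) : Prop :=
  exists (s : 'S_n) (y : 'I_r -> C), x = (fun i => Epoint y (s i)).

(* f in C[x_1..x_n] whose class in O(X_lam) is S_n-invariant *)
Definition invariant_on_X (f : {mpoly C[n]}) : Prop :=
  forall x, in_X x -> forall s : 'S_n, f.@[fun i => x (s i)] = f.@[x].

(* f vanishes on X_lam, i.e. its class in O(X_lam) is zero *)
Definition vanishes_on_X (f : {mpoly C[n]}) : Prop :=
  forall x, in_X x -> f.@[x] = 0.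

Definition yvar (i : 'I_n) : {mpoly C[r]} :=
  if insub (blk lam i) is Some j then 'X_j else 0.

(* pullback of f along E_lam -> C^n, identifying C[E_lam] = C[y_1..y_r] *)
Definition pullback (f : {mpoly C[n]}) : {mpoly C[r]} :=
  comp_mpoly [tuple yvar i | i < n] f.

Definition newton_sum (k : nat) : {mpoly C[r]} :=
  \sum_(j < r) (nth 0 lam j)%:R *: 'X_j ^+ k.

End Defs.

Inductive gen_subalg (R : comNzRingType) (A : algType R) (G : A -> Prop) : A -> Prop :=
  | gen_base a : G a -> gen_subalg G a
  | gen_scalar (c : R) : gen_subalg G (c%:A)
  | gen_add a b : gen_subalg G a -> gen_subalg G b -> gen_subalg G (a + b)
  | gen_mul a b : gen_subalg G a -> gen_subalg G b -> gen_subalg G (a * b).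

From HB Require Import structures.
From mathcomp Require Import all_boot all_fingroup all_algebra.
From mathcomp Require Import reals.
From mathcomp Require Import complex.
From mathcomp Require Import mpoly.
From mathcomp Require Import ring zify.
From Stdlib Require Import FunctionalExtensionality.

Set Implicit Arguments.
Unset Strict Implicit.
Unset Printing Implicit Defensive.
Local Open Scope ring_scope.
Import GRing.Theory Num.Theory.

(* The pullback is a ring map, and injectivity on invariant classes is immediate
   because X_lam is covered by the S_n-translates of E_lam.  For the image,
   averaging an invariant f over S_n does not change its pullback (over an
   infinite field polynomials are determined by their values), and the average
   is a polynomial in the elementary symmetric e_k.  The pullback of e_k is the
   k-th coefficient of prod_i (1 + y_(blk i) X), whose power sums are the Newton
   lam-sums, so Newton's identities (with k invertible in characteristic 0)
   express it through them.  Conversely the lam-sums are the pullbacks of the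
   power sums x_1^k + ... + x_n^k. *)

Section MPolyUni.
Variable R : comNzRingType.

Lemma eq_rmorph_mpoly n (S : nzRingType) (f g : {rmorphism {mpoly R[n]} -> S}) :
  (forall c, f c%:MP = g c%:MP) -> (forall i, f 'X_i = g 'X_i) -> f =1 g.
Proof.
move=> eqC eqX p; rewrite (mpolyE p) !rmorph_sum; apply: eq_bigr => m _.
rewrite -mul_mpolyC !rmorphM eqC mpolyXE_id !rmorph_prod; congr (_ * _).
by apply: eq_bigr => i _; rewrite !rmorphXn eqX.
Qed.

Lemma muniX n (i : 'I_n.+1) : muni 'X_i =
  match split (cast_ord (esym (addn1 n)) i) with
  | inl j => ('X_j)%:P
  | inr _ => 'X
  end :> {poly {mpoly R[n]}}.
Proof. by rewrite /muni mmapX mmap1U. Qed.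

Lemma muni_meval n (p : {mpoly R[n.+1]}) (v : 'I_n.+1 -> R) :
  p.@[v] = (map_poly (meval (v \o widen_ord (leqnSn n))) (muni p)).[v ord_max].
Proof.
pose ev := horner_eval (v ord_max) \o map_poly (meval (v \o widen_ord (leqnSn n)))
  \o @muni n R.
apply: (eq_rmorph_mpoly (f := meval v) (g := ev)) => [c|i].
  by rewrite /ev /= mevalC muniC map_polyC /= horner_evalE hornerC mevalC.
rewrite /ev /= mevalXU muniX horner_evalE; case: splitP => j hj.
  by rewrite map_polyC hornerC /= mevalXU; congr v; apply/val_inj; rewrite /= -hj.
rewrite map_polyX hornerX; congr v; apply/val_inj => /=.
by move: hj; rewrite ord1 addn0.
Qed.

Lemma muni_inj n : injective (@muni n R).
Proof.
pose unmuni := horner_eval ('X_ord_max : {mpoly R[n.+1]}) \o map_poly (@mwiden n R)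
  \o @muni n R.
have unmuniE : unmuni =1 idfun.
  apply: (eq_rmorph_mpoly (f := unmuni) (g := idfun)) => [c|i].
    by rewrite /unmuni /= muniC map_polyC horner_evalE hornerC /= mwidenC.
  rewrite /unmuni /= muniX horner_evalE; case: splitP => j hj.
    rewrite map_polyC hornerC /= mwidenX mnmwiden1; congr 'X_(_).
    by apply/val_inj; rewrite /= -hj.
  rewrite map_polyX hornerX; congr 'X_(_); apply/val_inj => /=.
  by move: hj; rewrite ord1 addn0.
by move=> p q eq_pq; rewrite -[p]unmuniE -[q]unmuniE /unmuni /= eq_pq.
Qed.

End MPolyUni.

Section VanishingPoly.
Variable K : numDomainType.

Lemma vanishing_poly_eq0 (q : {poly K}) : (forall a, q.[a] = 0) -> q = 0.
Proof.
move=> q0; apply: (@roots_geq_poly_eq0 _ q [seq i%:R | i <- iota 0 (size q)]).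
- by apply/allP => x /mapP [i _ ->]; apply/rootP.
- by rewrite map_inj_uniq ?iota_uniq // => a b /eqP; rewrite eqr_nat => /eqP.
- by rewrite size_map size_iota.
Qed.

Lemma vanishing_mpoly_eq0 n (p : {mpoly K[n]}) : (forall v, p.@[v] = 0) -> p = 0.
Proof.
elim: n p => [|n IH] p p0.
  by have := p0 (fun _ => 0); rewrite (nvar0_mpolyC p) mevalC => ->.
apply: muni_inj; rewrite muni0; apply/polyP => k; rewrite coef0; apply: IH => w.
suff: map_poly (meval w) (muni p) = 0 by move/polyP/(_ k); rewrite coef_map coef0.
apply: vanishing_poly_eq0 => a.
have := p0 (fun i => if insub (val i) is Some j then w j else a).
rewrite muni_meval /= insubF ?ltnn //; congr (_.[_] = _).
by apply: eq_map_poly => x; apply: meval_eq => i; rewrite /= valK.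
Qed.

End VanishingPoly.

Section Newton.
Variable A : comNzRingType.
Implicit Types (s : seq A) (a : A).

Definition esym_genpoly s : {poly A} := \prod_(a <- s) (a%:P * 'X + 1).

Definition pow_sum s i : A := \sum_(a <- s) a ^+ i.

(* [k]-truncation of the logarithmic derivative of [esym_genpoly s]. *)
Definition logderiv_trunc s k : {poly A} :=
  \sum_(i < k) ((-1) ^+ i * pow_sum s i.+1)%:P * 'X^i.

Lemma logderiv_trunc1 a k : logderiv_trunc [:: a] k * (a%:P * 'X + 1)
  = a%:P - ((-1) ^+ k * a ^+ k.+1)%:P * 'X^k.
Proof.
elim: k => [|k IH].
  by rewrite /logderiv_trunc big_ord0 mul0r !expr0 mul1r expr1 mulr1 subrr.
move: IH; rewrite /logderiv_trunc /pow_sum big_ord_recr /= mulrDl => ->.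
rewrite !big_seq1 !rmorphM !rmorphXn /= rmorphN1 !exprS; ring.
Qed.

Lemma logderiv_trunc_cons a s k :
  logderiv_trunc (a :: s) k = logderiv_trunc [:: a] k + logderiv_trunc s k.
Proof.
rewrite /logderiv_trunc -big_split /=; apply: eq_bigr => i _.
by rewrite /pow_sum big_cons big_seq1 mulrDr rmorphD mulrDl.
Qed.

Lemma logderiv_trunc_esym s k :
  exists G, logderiv_trunc s k * esym_genpoly s = (esym_genpoly s)^`() + 'X^k * G.
Proof.
elim: s => [|a s [G IH]].
  exists 0; rewrite /esym_genpoly big_nil mulr0 addr0 mulr1 -polyC1 derivC.
  by rewrite /logderiv_trunc big1 // => i _; rewrite /pow_sum big_nil mulr0 mul0r.
exists ((a%:P * 'X + 1) * G - ((-1) ^+ k * a ^+ k.+1)%:P * esym_genpoly s).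
have deriv_factor : (a%:P * 'X + 1)^`() = a%:P :> {poly A}.
  by rewrite derivD -polyC1 derivC addr0 deriv_mulC derivX mulr1.
rewrite logderiv_trunc_cons /esym_genpoly big_cons -/(esym_genpoly s) derivM deriv_factor.
rewrite mulrDl mulrA logderiv_trunc1 mulrCA IH; ring.
Qed.

Lemma newton_identity s k : (esym_genpoly s)`_k.+1 *+ k.+1
  = \sum_(j < k.+1) (-1) ^+ j * pow_sum s j.+1 * (esym_genpoly s)`_(k - j).
Proof.
have [G eqG] := logderiv_trunc_esym s k.+1.
have := congr1 (fun p : {poly A} => p`_k) eqG.
rewrite /= coefD coefXnM ltnSn addr0 coef_deriv => <-.
rewrite coefM; apply: eq_bigr => j _.
rewrite /logderiv_trunc coef_sum (bigD1 j) //= big1 ?addr0.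
  by rewrite coefCM coefXn eqxx mulr1.
move=> i /eqP neq_ij; rewrite coefCM coefXn.
by case: eqP => [eq_ij|]; [case: neq_ij; apply/val_inj | rewrite mulr0].
Qed.

End Newton.

Section Blocks.
Variable lam : seq nat.
Local Notation r := (size lam).

Definition part_sum m := (\sum_(k < m) nth 0 lam k)%N.

Lemma leq_part_sum m m' : (m <= m')%N -> (part_sum m <= part_sum m')%N.
Proof.
move=> le_mm'; rewrite /part_sum -!(big_mkord xpredT).
by rewrite (big_cat_nat (leq0n m) le_mm') leq_addr.
Qed.

Lemma part_sumS m : part_sum m.+1 = (part_sum m + nth 0 lam m)%N.
Proof. by rewrite /part_sum big_ord_recr. Qed.

Lemma part_sum_size : part_sum r = sumn lam.
Proof. by rewrite /part_sum sumnE (big_nth 0) big_mkord. Qed.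

Lemma leq_blk i j : (j <= r)%N -> (j <= blk lam i)%N = (part_sum j <= i)%N.
Proof.
move=> le_jr; rewrite /blk -(subnKC le_jr) iotaD count_cat add0n.
set P := (fun k => _); have [le_ji|lt_ij] := leqP (part_sum j) i.
  rewrite (@eq_in_count _ P predT) ?count_predT ?size_iota ?leq_addr //.
  move=> k; rewrite mem_iota add0n => /andP [_ lt_kj].
  exact: leq_trans (leq_part_sum lt_kj) le_ji.
rewrite (@eq_in_count _ P pred0 (iota j _)) ?count_pred0 ?addn0; last first.
  move=> k; rewrite mem_iota => /andP [le_jk _]; apply/negbTE; rewrite -ltnNge.
  exact: leq_trans lt_ij (leq_part_sum (leqW le_jk)).
have [j0|j_gt0] := posnP j; first by rewrite j0 /part_sum big_ord0 in lt_ij.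
apply/negbTE; rewrite -ltnNge -{2}(size_iota 0 j) -(count_predC P) -addn1 leq_add2l.
rewrite -has_count; apply/hasP; exists j.-1.
  by rewrite mem_iota; lia.
by rewrite /= /P -ltnNge prednK.
Qed.

Lemma blk_lt_size i : (i < sumn lam)%N -> (blk lam i < r)%N.
Proof. by move=> lt_i; rewrite ltnNge leq_blk // part_sum_size -ltnNge. Qed.

Lemma blk_eqE i j : (j < r)%N -> (blk lam i == j) = (part_sum j <= i < part_sum j.+1)%N.
Proof.
move=> lt_jr; rewrite eqn_leq andbC -leq_blk ?(ltnW lt_jr) //; congr andb.
by rewrite leqNgt leq_blk // ltnNge.
Qed.

Lemma sum_itv_indicator n a b :
  (\sum_(i < n) ((a <= i < b)%N : nat) = minn b n - minn a n)%N.
Proof.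
elim: n => [|n IH]; first by rewrite big_ord0 !minn0.
by rewrite big_ord_recr /= IH; case: (leqP a n); case: (ltnP n b) => /=; lia.
Qed.

Lemma card_blk n j : sumn lam = n -> (j < r)%N ->
  (\sum_(i < n) ((blk lam i == j) : nat))%N = nth 0%N lam j.
Proof.
move=> sum_lam lt_jr; under eq_bigr => i _ do rewrite blk_eqE //.
have le_n : (part_sum j.+1 <= n)%N by rewrite -sum_lam -part_sum_size leq_part_sum.
rewrite sum_itv_indicator; move: le_n; rewrite part_sumS; lia.
Qed.

End Blocks.

Section GenSubalg.
Variables (R : comNzRingType) (A : algType R) (G : A -> Prop).
Local Notation gen := (gen_subalg G).

Lemma gen_subalgZ c a : gen a -> gen (c *: a).
Proof. by move=> gen_a; rewrite -mulr_algl; apply: gen_mul => //; apply: gen_scalar. Qed.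

Lemma gen_subalg0 : gen 0.
Proof. by rewrite -(scale0r (1 : A)); apply: gen_scalar. Qed.

Lemma gen_subalg1 : gen 1.
Proof. by rewrite -(scale1r (1 : A)); apply: gen_scalar. Qed.

Lemma gen_subalg_sum (I : Type) (s : seq I) (P : pred I) (F : I -> A) :
  (forall i, P i -> gen (F i)) -> gen (\sum_(i <- s | P i) F i).
Proof. by move=> genF; apply: big_ind => //; [exact: gen_subalg0 | exact: gen_add]. Qed.

Lemma gen_subalg_prod (I : Type) (s : seq I) (P : pred I) (F : I -> A) :
  (forall i, P i -> gen (F i)) -> gen (\prod_(i <- s | P i) F i).
Proof. by move=> genF; apply: big_ind => //; [exact: gen_subalg1 | exact: gen_mul]. Qed.

Lemma gen_subalgX a k : gen a -> gen (a ^+ k).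
Proof.
by move=> gen_a; rewrite -(card_ord k) -prodr_const; apply: gen_subalg_prod.
Qed.

End GenSubalg.

Lemma msym_meval (R : comNzRingType) n (s : 'S_n) (p : {mpoly R[n]}) v :
  (msym s p).@[v] = p.@[v \o s].
Proof.
rewrite -[msym s p]comp_mpoly_id msym_mPo comp_mpoly_meval; apply: meval_eq => i.
by rewrite !tnth_mktuple mevalXU.
Qed.

Lemma sum_msym_sym (R : comNzRingType) n (p : {mpoly R[n]}) :
  \sum_(s : 'S_n) msym s p \is symmetric.
Proof.
apply/issymP => t; rewrite raddf_sum /=.
under eq_bigr => s _ do rewrite -msymMm.
by rewrite [RHS](reindex_inj (mulIg t)).
Qed.

Section Pullback.
Variables (C : comNzRingType) (n : nat) (lam : seq nat).
Local Notation r := (size lam).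

HB.instance Definition _ := GRing.LRMorphism.copy (@pullback C n lam)
  (comp_mpoly [tuple yvar C lam i | i < n]).

Lemma pullbackX (i : 'I_n) : pullback lam 'X_i = yvar C lam i.
Proof. by rewrite /pullback comp_mpolyXU -tnth_nth tnth_mktuple. Qed.

Lemma pullback_meval (f : {mpoly C[n]}) y : (pullback lam f).@[y] = f.@[@Epoint C n lam y].
Proof.
rewrite comp_mpoly_meval; apply: meval_eq => i.
by rewrite tnth_mktuple /yvar /Epoint /ext; case: insub => [j|]; rewrite ?mevalXU ?meval0.
Qed.

Lemma Epoint_in_X y : in_X lam (@Epoint C n lam y).
Proof. by exists 1%g, y; apply: functional_extensionality => i; rewrite perm1. Qed.

Lemma invariant_pullback0_vanishes (f : {mpoly C[n]}) :
  invariant_on_X lam f -> pullback lam f = 0 -> vanishes_on_X lam f.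
Proof.
move=> f_inv f0 _ [s [y ->]].
by rewrite (f_inv _ (Epoint_in_X y)) -pullback_meval f0 meval0.
Qed.

Definition mpowsum k : {mpoly C[n]} := \sum_(i < n) 'X_i ^+ k.

Lemma mpowsum_invariant k : invariant_on_X lam (mpowsum k).
Proof.
move=> x _ s; rewrite !rmorph_sum /= [RHS](reindex_inj (@perm_inj _ s)) /=.
by apply: eq_bigr => i _; rewrite !rmorphXn /= !mevalXU.
Qed.

Hypothesis sum_lam : sumn lam = n.

Lemma yvarX (i : 'I_n) k :
  yvar C lam i ^+ k = \sum_(j < r) ((blk lam i == j) : nat)%:R *: 'X_j ^+ k.
Proof.
have lt_blk : (blk lam i < r)%N by apply: blk_lt_size; rewrite sum_lam.
rewrite /yvar insubT /= (bigD1 (Ordinal lt_blk)) //= eqxx scale1r big1 ?addr0 //.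
move=> j neq_j; suff -> : (blk lam i == j) = false by rewrite scale0r.
by apply/negbTE; apply: contra neq_j => /eqP eq_j; apply/eqP/val_inj.
Qed.

Lemma sum_yvarX k : \sum_(i < n) yvar C lam i ^+ k = newton_sum C lam k.
Proof.
under eq_bigr => i _ do rewrite yvarX.
rewrite exchange_big; apply: eq_bigr => j _.
by rewrite -scaler_suml -natr_sum card_blk.
Qed.

Lemma pullback_mpowsum k : pullback lam (mpowsum k) = newton_sum C lam k.
Proof.
rewrite rmorph_sum -sum_yvarX; apply: eq_bigr => i _.
by rewrite rmorphXn /= pullbackX.
Qed.

Local Notation newton_gen := (fun p => exists k, (0 < k)%N /\ p = newton_sum C lam k).

Lemma pullback_invariant_of_gen g : gen_subalg newton_gen g ->
  exists f : {mpoly C[n]}, invariant_on_X lam f /\ pullback lam f = g.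
Proof.
elim=> [_ [k [_ ->]] | c | a b _ [fa [fa_inv <-]] _ [fb [fb_inv <-]]
        | a b _ [fa [fa_inv <-]] _ [fb [fb_inv <-]]].
- by exists (mpowsum k); split; [exact: mpowsum_invariant | exact: pullback_mpowsum].
- exists c%:MP; split; first by move=> x _ s; rewrite !mevalC.
  by rewrite -alg_mpolyC rmorph_alg.
- exists (fa + fb); split; last exact: raddfD.
  by move=> x x_in s; rewrite !mevalD fa_inv ?fb_inv.
- exists (fa * fb); split; last exact: rmorphM.
  by move=> x x_in s; rewrite !mevalM fa_inv ?fb_inv.
Qed.

Definition yvars := [seq yvar C lam i | i <- enum 'I_n].

Lemma pow_sum_yvars k : pow_sum yvars k = newton_sum C lam k.
Proof. by rewrite /pow_sum big_map big_enum (eq_bigl xpredT) //= sum_yvarX. Qed.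

Lemma esym_genpoly_yvars k : (esym_genpoly yvars)`_k = pullback lam (mesym n C k).
Proof.
rewrite /esym_genpoly big_map big_enum (eq_bigl xpredT) //=.
rewrite bigA_distr coef_sum mesymE /pullback raddf_sum [RHS]big_mkcond /=.
apply: eq_bigr => J _; rewrite -big_mkcond /= big_split /= prodr_const -rmorph_prod.
rewrite coefCM coefXn eq_sym; case: eqP => _; last by rewrite mulr0.
rewrite mulr1 comp_mpolyX big_mkcond; apply: eq_bigr => i _.
by rewrite tnth_mktuple /mesym1 mnmE; case: (i \in J).
Qed.

End Pullback.

Section CharZero.
Variables (K : numFieldType) (n : nat) (lam : seq nat).
Hypothesis sum_lam : sumn lam = n.
Local Notation gen := (gen_subalg (fun p => exists k, (0 < k)%N /\ p = newton_sum K lam k)).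

Lemma gen_esym_genpoly_yvars k : gen ((esym_genpoly (yvars K n lam))`_k).
Proof.
set ys := yvars K n lam; elim/ltn_ind: k => -[_ | k IH].
  by rewrite esym_genpoly_yvars mesym0E rmorph1; exact: gen_subalg1.
have -> : (esym_genpoly ys)`_k.+1 = (k.+1%:R : K)^-1 *:
    \sum_(j < k.+1) (-1) ^+ j * pow_sum ys j.+1 * (esym_genpoly ys)`_(k - j).
  by rewrite -newton_identity -scaler_nat scalerA mulVf ?scale1r // pnatr_eq0.
apply/gen_subalgZ/gen_subalg_sum => j _; apply: gen_mul.
  apply: gen_mul; last by apply: gen_base; exists j.+1; rewrite pow_sum_yvars.
  by rewrite -scaleN1r; apply/gen_subalgX/gen_subalgZ/gen_subalg1.
by apply: IH; rewrite ltnS leq_subr.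
Qed.

Lemma gen_pullback_sym (p : {mpoly K[n]}) : p \is symmetric -> gen (pullback lam p).
Proof.
case/sym_fundamental => t [<- _]; rewrite comp_mpolyEX rmorph_sum.
apply: gen_subalg_sum => m _; rewrite /= linearZ /= comp_mpolyX rmorph_prod.
apply/gen_subalgZ/gen_subalg_prod => i _; rewrite rmorphXn tnth_mktuple.
by apply: gen_subalgX; rewrite /= -esym_genpoly_yvars; exact: gen_esym_genpoly_yvars.
Qed.

Lemma pullback_msym_invariant (f : {mpoly K[n]}) (s : 'S_n) :
  invariant_on_X lam f -> pullback lam (msym s f) = pullback lam f.
Proof.
move=> f_inv; apply/eqP; rewrite -subr_eq0; apply/eqP/vanishing_mpoly_eq0 => y.
by rewrite mevalB !pullback_meval msym_meval (f_inv _ (Epoint_in_X _ _)) subrr.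
Qed.

Lemma gen_pullback_invariant (f : {mpoly K[n]}) :
  invariant_on_X lam f -> gen (pullback lam f).
Proof.
move=> f_inv; have := gen_pullback_sym (sum_msym_sym f).
rewrite rmorph_sum /=; under eq_bigr => s _ do rewrite pullback_msym_invariant //.
rewrite sumr_const card_Sn -scaler_nat => /(gen_subalgZ (n`!%:R^-1)).
by rewrite scalerA mulVf ?scale1r // pnatr_eq0 -lt0n fact_gt0.
Qed.

End CharZero.

Theorem proposition2p2 (R : realType) (n : nat) (lam : seq nat)
    (Hsum : sumn lam = n) (Hpos : all (fun k => 0 < k)%N lam)
    (Hsorted : sorted geq lam) :
  (* the pullback O(X_lam/S_n) -> C[y_1..y_r] is injective *)
  (forall f : {mpoly (R[i])[n]}, invariant_on_X lam f ->
     pullback lam f = 0 -> vanishes_on_X lam f) /\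
  (* and its image is the subalgebra gen_subalg by the Newton lam-sums *)
  (forall g : {mpoly (R[i])[size lam]},
     (exists f : {mpoly (R[i])[n]}, invariant_on_X lam f /\ pullback lam f = g)
     <-> gen_subalg (fun p => exists k, (0 < k)%N /\ p = newton_sum (R[i]) lam k) g).
Proof.
split; first exact: invariant_pullback0_vanishes.
move=> g; split; first by case=> f [f_inv <-]; exact: gen_pullback_invariant.
exact: pullback_invariant_of_gen.
Qed.
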